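(* Let $m, n \in \mathbb N$. If $A, B$ are $2n\times 2m$ complex matrices such that $A(H \otimes I_m) = (H \otimes I_n)B$ for all $H \in \mathcal{IH}_2^0$, then $A = B = I_2 \otimes T$ for some $n \times m$ complex matrix $T$.
   Context: $\mathcal{IH}_2^0$ is the set of $2\times 2$ complex matrices that are hermitian, unitary and of trace zero; $\otimes$ is the Kronecker product and $I_n$ the identity matrix. *)

From HB Require Import structures.
From mathcomp Require Import all_boot all_order all_algebra.
From mathcomp Require Import reals.
From mathcomp.real_closed Require Import complex mxtens.
Set Implicit Arguments. Unset Strict Implicit. Unset Printing Implicit Defensive.
Import Order.TTheory GRing.Theory Num.Theory.
Local Open Scope ring_scope.

Definition adjmx (R : rcfType) (p q : nat) (H : 'M[R[i]]_(p, q)) : 'M[R[i]]_(q, p) :=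
  (map_mx (@conjc R) H)^T.

Definition IH20 (R : rcfType) (H : 'M[R[i]]_2) : Prop :=
  [/\ adjmx H = H,
      H *m adjmx H = 1%:M /\ adjmx H *m H = 1%:M
    & \tr H = 0].

(* Read blockwise, A and B are n x m arrays of 2 x 2 blocks, and corresponding
   blocks P of A and Q of B satisfy P H = H Q for every H in IH_2^0, in
   particular for the three Pauli matrices.  The real ones, sigma_x and
   sigma_z, already force P = [[a, b], [-b, a]] and Q = P^T; sigma_y then gives
   b = -b, so P = Q = a I_2, and T collects these scalars a. *)
From HB Require Import structures.
From mathcomp Require Import all_boot all_order all_algebra.
From mathcomp Require Import reals.
From mathcomp.real_closed Require Import complex mxtens.
Set Implicit Arguments.
Unset Strict Implicit.
Unset Printing Implicit Defensive.
Import GRing.Theory Num.Theory.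
Local Open Scope ring_scope.

Section TensorSlices.
Variables (R : pzRingType) (p : nat).

Lemma big_mxtens_index m (G : 'I_(p * m) -> R) :
  \sum_k G k = \sum_(a < p) \sum_(l < m) G (mxtens_index (a, l)).
Proof.
rewrite pair_big (reindex (fun x : 'I_p * 'I_m => mxtens_index (x.1, x.2))) /=.
  by apply: eq_bigr => -[].
exists (@mxtens_unindex p m) => [[a l] _|k _]; first by rewrite mxtens_indexK.
by rewrite -surjective_pairing mxtens_unindexK.
Qed.

Definition tens_slice n m (A : 'M[R]_(p * n, p * m)) i j : 'M[R]_p :=
  \matrix_(a, c) A (mxtens_index (a, i)) (mxtens_index (c, j)).

Lemma tens_slice_mulmx_tens1 n m (A : 'M[R]_(p * n, p * m)) (H : 'M[R]_p) i j :
  tens_slice (A *m (H *t (1%:M : 'M_m))) i j = tens_slice A i j *m H.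
Proof.
apply/matrixP => a c; rewrite !mxE big_mxtens_index; apply: eq_bigr => b _.
rewrite (bigD1 j) //= big1 => [|l /negPf ne_lj]; rewrite tensmxE !mxE.
  by rewrite eqxx mulr1 addr0.
by rewrite ne_lj mulr0 mulr0.
Qed.

Lemma tens_slice_tens1_mulmx n m (B : 'M[R]_(p * n, p * m)) (H : 'M[R]_p) i j :
  tens_slice ((H *t (1%:M : 'M_n)) *m B) i j = H *m tens_slice B i j.
Proof.
apply/matrixP => a c; rewrite !mxE big_mxtens_index; apply: eq_bigr => b _.
rewrite (bigD1 i) //= big1 => [|l /negPf ne_li]; rewrite tensmxE !mxE.
  by rewrite eqxx mulr1 addr0.
by rewrite eq_sym ne_li mulr0 mul0r.
Qed.

Lemma tens1mx_slices n m (A : 'M[R]_(p * n, p * m)) (T : 'M[R]_(n, m)) :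
  (forall i j, tens_slice A i j = (T i j)%:M) -> A = 1%:M *t T.
Proof.
move=> sliceA; apply/matrixP => k l.
case: (mxtens_indexP k) => a i; case: (mxtens_indexP l) => c j.
have := congr1 (fun P : 'M_p => P a c) (sliceA i j).
by rewrite tensmxE !mxE /= mulr_natl.
Qed.

End TensorSlices.

Section Matrix2.
Variable R : pzRingType.

Definition mx2 (x y z w : R) : 'M[R]_2 :=
  \matrix_(a, b) if a == 0 then (if b == 0 then x else y)
                 else (if b == 0 then z else w).

Lemma mx2_eta (M : 'M[R]_2) : M = mx2 (M 0 0) (M 0 1) (M 1 0) (M 1 1).
Proof.
apply/matrixP => a b; rewrite mxE.
by case: a => [[|[|//]]] ?; case: b => [[|[|//]]] ? /=; congr (M _ _); apply: val_inj.
Qed.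

Lemma mx2_inj x y z w x' y' z' w' :
  mx2 x y z w = mx2 x' y' z' w' -> [/\ x = x', y = y', z = z' & w = w'].
Proof.
move/matrixP => e.
by split; [move: (e 0 0) | move: (e 0 1) | move: (e 1 0) | move: (e 1 1)]; rewrite !mxE.
Qed.

Lemma mulmx_mx2 x y z w x' y' z' w' :
  mx2 x y z w *m mx2 x' y' z' w' =
  mx2 (x * x' + y * z') (x * y' + y * w') (z * x' + w * z') (z * y' + w * w').
Proof.
apply/matrixP => a b; rewrite !mxE !big_ord_recl big_ord0 !mxE addr0.
by case: a => [[|[|//]]] ?; case: b => [[|[|//]]] ?.
Qed.

Lemma scalar_mx2 a : a%:M = mx2 a 0 0 a.
Proof. by rewrite [LHS]mx2_eta !mxE. Qed.

Lemma mxtrace_mx2 x y z w : \tr (mx2 x y z w) = x + w.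
Proof. by rewrite /mxtrace !big_ord_recl big_ord0 !mxE addr0. Qed.

End Matrix2.

Section Pauli.
Variable R : rcfType.
Local Notation C := R[i].

Lemma adjmx_mx2 (x y z w : C) : adjmx (mx2 x y z w) = mx2 x^* z^* y^* w^*.
Proof. by rewrite [LHS]mx2_eta !mxE. Qed.

Definition pauli_x : 'M[C]_2 := mx2 0 1 1 0.
Definition pauli_y : 'M[C]_2 := mx2 0 (- 'i) 'i 0.
Definition pauli_z : 'M[C]_2 := mx2 1 0 0 (-1).

Lemma IH20_hermitian_involution (H : 'M[C]_2) :
  adjmx H = H -> H *m H = 1%:M -> \tr H = 0 -> IH20 H.
Proof. by move=> adjH HH trH; rewrite /IH20 adjH HH trH. Qed.

Lemma IH20_pauli_x : IH20 pauli_x.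
Proof.
rewrite /pauli_x; apply: IH20_hermitian_involution.
- by rewrite adjmx_mx2 conjC0 conjC1.
- by rewrite mulmx_mx2 scalar_mx2 !(mul0r, mulr0, mul1r, add0r, addr0).
- by rewrite mxtrace_mx2 addr0.
Qed.

Lemma IH20_pauli_y : IH20 pauli_y.
Proof.
rewrite /pauli_y; apply: IH20_hermitian_involution.
- by rewrite adjmx_mx2 conjC0 -conjCi conjCK.
- rewrite mulmx_mx2 scalar_mx2 !(mul0r, mulr0, add0r, addr0) mulNr mulrN.
  by rewrite -expr2 sqrCi opprK.
- by rewrite mxtrace_mx2 addr0.
Qed.

Lemma IH20_pauli_z : IH20 pauli_z.
Proof.
rewrite /pauli_z; apply: IH20_hermitian_involution.
- by rewrite adjmx_mx2 conjC0 conjC1 rmorphN1.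
- by rewrite mulmx_mx2 scalar_mx2 !(mul0r, mulr0, mul1r, add0r, addr0) mulrNN mulr1.
- by rewrite mxtrace_mx2 subrr.
Qed.

Lemma pauli_intertwiner_scalar (P Q : 'M[C]_2) :
  P *m pauli_x = pauli_x *m Q -> P *m pauli_y = pauli_y *m Q ->
  P *m pauli_z = pauli_z *m Q -> P = (P 0 0)%:M /\ Q = (P 0 0)%:M.
Proof.
rewrite (mx2_eta P) (mx2_eta Q) !mxE /=.
move: (P 0 0) (P 0 1) (P 1 0) (P 1 1) (Q 0 0) (Q 0 1) (Q 1 0) (Q 1 1).
move=> p00 p01 p10 p11 q00 q01 q10 q11.
rewrite !mulmx_mx2 !(mul0r, mulr0, mul1r, mulr1, add0r, addr0, mulrN, mulNr).
case/mx2_inj => x00 x01 x10 x11; case/mx2_inj => y00 _ _ _.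
case/mx2_inj => z00 z01 z10 /oppr_inj z11.
have p01N : p01 = - q10.
  by apply: (mulIf (neq0Ci C)); rewrite y00 mulNr mulrC.
have q10_0 : q10 = 0 by apply/eqP; rewrite -eqNr -p01N x00.
by rewrite !scalar_mx2 z10 -z01 x00 q10_0 oppr0 z11 -x01 -z00; split.
Qed.

End Pauli.

Theorem lemma3p3 (R : realType) (m n : nat) (A B : 'M[R[i]]_(2 * n, 2 * m)) :
  (forall H : 'M[R[i]]_2, IH20 H ->
     A *m (H *t (1%:M : 'M[R[i]]_m)) = (H *t (1%:M : 'M[R[i]]_n)) *m B) ->
  exists T : 'M[R[i]]_(n, m),
    A = (1%:M : 'M[R[i]]_2) *t T /\ B = (1%:M : 'M[R[i]]_2) *t T.
Proof.
move=> hAB.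
have slices_intertwine i j H : IH20 H ->
    tens_slice A i j *m H = H *m tens_slice B i j.
  by move=> IH20_H; rewrite -tens_slice_mulmx_tens1 hAB // tens_slice_tens1_mulmx.
pose T := \matrix_(i, j) tens_slice A i j 0 0.
have slices_scalar i j :
    tens_slice A i j = (T i j)%:M /\ tens_slice B i j = (T i j)%:M.
  rewrite mxE; apply: pauli_intertwiner_scalar; apply: slices_intertwine.
  - exact: IH20_pauli_x.
  - exact: IH20_pauli_y.
  - exact: IH20_pauli_z.
by exists T; split; apply: tens1mx_slices => i j; case: (slices_scalar i j).
Qed.
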